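(* Let $\Lambda,\Gamma$ be finite simplicial graphs with complement graphs $\Lambda^c,\Gamma^c$, and suppose there is a surjective and locally surjective graph morphism $\Lambda^c\to\Gamma^c$. Then $C(\Gamma)$ is quasi-isometrically embedded in $C(\Lambda)$ (i.e. there is an injective homomorphism $C(\Gamma)\hookrightarrow C(\Lambda)$ which is a quasi-isometric embedding for the word metrics of the vertex generating sets).
   Context: The complement graph $\Gamma^c$ has vertex set $V(\Gamma)$, with two distinct vertices adjacent in $\Gamma^c$ iff they are not adjacent in $\Gamma$. A graph morphism $g\colon X\to Y$ is a map $V(X)\to V(Y)$ sending each pair of adjacent vertices to a pair of adjacent vertices. It is locally surjective if for every vertex $v$ of $X$ and every edge $e$ of $Y$ incident to $g(v)$ there is an edge $\tilde e$ of $X$ incident to $v$ with $g(\tilde e)=e$. The right-angled Coxeter group is $C(\Gamma)=\langle V(\Gamma)\mid v^2=1,\ [u,v]=1\text{ iff }\{u,v\}\in E(\Gamma)\rangle$. *)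

From Stdlib Require Import Relations.
From mathcomp Require Import all_boot.
From mathcomp Require Import boolp.
Set Implicit Arguments. Unset Strict Implicit. Unset Printing Implicit Defensive.

Definition simple_graph (T : finType) (e : rel T) : Prop :=
  symmetric e /\ irreflexive e.

Definition compl_graph (T : finType) (e : rel T) : rel T :=
  fun x y => (x != y) && ~~ e x y.

Definition graph_morphism (S T : finType) (eS : rel S) (eT : rel T)
  (g : S -> T) : Prop :=
  forall x y, eS x y -> eT (g x) (g y).

Definition locally_surjective (S T : finType) (eS : rel S) (eT : rel T)
  (g : S -> T) : Prop :=
  forall v w, eT (g v) w -> exists u, eS v u /\ g u = w.

(* Right-angled Coxeter group C(Gamma): words over the vertices modulo the
   congruence generated by  v v = 1  and  u v = v u  for adjacent u, v. *)
Inductive racg_step (T : finType) (e : rel T) : seq T -> seq T -> Prop :=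
| racg_cancel a b v : racg_step e (a ++ [:: v; v] ++ b) (a ++ b)
| racg_comm a b u v : e u v -> racg_step e (a ++ [:: u; v] ++ b) (a ++ [:: v; u] ++ b).

Definition racg_eq (T : finType) (e : rel T) : seq T -> seq T -> Prop :=
  clos_refl_sym_trans (seq T) (racg_step e).

Definition racg_len (T : finType) (e : rel T) (w : seq T) : nat :=
  ex_minn (P := fun n => `[< exists w', size w' = n /\ racg_eq e w w' >])
    (ex_intro _ (size w) (asboolT (ex_intro _ w (conj erefl (rst_refl _ _ w))))).

(* Word metric: d(g,h) = |g^{-1} h|; inverse of a word of involutions is its reverse. *)
Definition racg_dist (T : finType) (e : rel T) (w1 w2 : seq T) : nat :=
  racg_len e (rev w1 ++ w2).

Definition racg_hom (TG TL : finType) (eG : rel TG) (eL : rel TL)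
  (phi : TG -> seq TL) : Prop :=
  (forall v, racg_eq eL (phi v ++ phi v) [::]) /\
  (forall u v, eG u v -> racg_eq eL (phi u ++ phi v) (phi v ++ phi u)).

Definition hom_word (TG TL : finType) (phi : TG -> seq TL) (w : seq TG) : seq TL :=
  flatten (map phi w).

Definition racg_qi_embedding (TG TL : finType) (eG : rel TG) (eL : rel TL)
  (phi : TG -> seq TL) : Prop :=
  racg_hom eG eL phi /\
  (forall w, racg_eq eL (hom_word phi w) [::] -> racg_eq eG w [::]) /\
  exists K C : nat, 0 < K /\ forall w1 w2 : seq TG,
    racg_dist eG w1 w2 <= K * racg_dist eL (hom_word phi w1) (hom_word phi w2) + C /\
    racg_dist eL (hom_word phi w1) (hom_word phi w2) <= K * racg_dist eG w1 w2 + C.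

From Stdlib Require Import Relations.
From mathcomp Require Import all_boot boolp.

Set Implicit Arguments. Unset Strict Implicit. Unset Printing Implicit Defensive.

(* The fibres of g are cliques of Lambda: two non-adjacent vertices of one fibre
   would be adjacent in Lambda^c, so their common image would be adjacent to itself
   in Gamma^c. Fibres over adjacent vertices of Gamma are completely joined in
   Lambda. Hence sending v to the product of its fibre defines a homomorphism
   phi : C(Gamma) -> C(Lambda). By local surjectivity, phi maps reduced words (no
   factor x m x with x commuting with every letter of m) to reduced words, and
   reduced words are geodesic (Tits). So |w| <= |phi w| <= |V(Lambda)| |w| for a
   geodesic w, which gives injectivity and the quasi-isometry bounds at once.

   Tits' theorem comes from a normal form: read the word letter by letter, cancelling
   each letter against an earlier occurrence that it commutes past, or else appending
   it. For each non-adjacent pair {a, b}, a = b allowed, the projection of the normal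
   form onto {a, b} depends only on the group element. The pairs {a, a} count letter
   multiplicities, so the length of the normal form is an invariant, and a reduced
   word is its own normal form. *)

Lemma filter_rem (S : eqType) (P : pred S) x (s : seq S) :
  filter P (rem x s) = if P x then rem x (filter P s) else filter P s.
Proof.
elim: s => [|y s IH] /=; first by case: ifP.
case: (eqVneq y x) => [->|neq_yx]; rewrite /= ?eqxx.
  by case: (P x); rewrite /= ?eqxx.
by rewrite IH; case: (P y); case: (P x); rewrite /= ?(negbTE neq_yx).
Qed.

Section RacgWords.

Variables (T : finType) (e : rel T).

Lemma racg_step_cat c d w w' :
  racg_step e w w' -> racg_step e (c ++ w ++ d) (c ++ w' ++ d).
Proof.
case=> [a b v|a b u v euv]; rewrite -!catA.
  by have := racg_cancel e (c ++ a) (b ++ d) v; rewrite -!catA.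
by have := racg_comm (c ++ a) (b ++ d) euv; rewrite -!catA.
Qed.

Lemma racg_eq_ctx c d w w' :
  racg_eq e w w' -> racg_eq e (c ++ w ++ d) (c ++ w' ++ d).
Proof.
elim=> {w w'} [w w' /(racg_step_cat c d)|w|w w' _|w1 w2 w3 _ IH12 _ IH23].
- exact: rst_step.
- exact: rst_refl.
- exact: rst_sym.
- exact: rst_trans IH12 IH23.
Qed.

Lemma racg_eq_cat w1 w1' w2 w2' :
  racg_eq e w1 w1' -> racg_eq e w2 w2' -> racg_eq e (w1 ++ w2) (w1' ++ w2').
Proof.
move=> eq1 eq2; apply: (rst_trans _ _ _ (w1' ++ w2)).
  exact: (racg_eq_ctx [::] w2 eq1).
by have := racg_eq_ctx w1' [::] eq2; rewrite !cats0.
Qed.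

Lemma racg_eq_commute x m : all (e x) m -> racg_eq e (x :: m) (m ++ [:: x]).
Proof.
elim: m => [|y m IH] /=; first by move=> _; apply: rst_refl.
case/andP=> exy /IH eq_m; apply: (rst_trans _ _ _ (y :: x :: m)).
  exact/rst_step/(racg_comm [::] m exy).
exact: (racg_eq_cat (rst_refl _ _ [:: y]) eq_m).
Qed.

Lemma racg_eq_catC s t :
  {in s & t, forall x y, e x y} -> racg_eq e (s ++ t) (t ++ s).
Proof.
elim: s => [|x s IH] adj_st /=; first by rewrite cats0; apply: rst_refl.
have adj_x : all (e x) t by apply/allP => y; apply: adj_st; rewrite inE eqxx.
apply: (rst_trans _ _ _ (x :: t ++ s)).
  apply: (racg_eq_cat (rst_refl _ _ [:: x])); apply: IH => y z ys.
  by apply: adj_st; rewrite inE ys orbT.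
by rewrite -cat_rcons -cats1; apply: racg_eq_cat (racg_eq_commute adj_x) (rst_refl _ _ _).
Qed.

Lemma racg_eq_rev_clique s :
  uniq s -> {in s &, forall x y, x != y -> e x y} -> racg_eq e s (rev s).
Proof.
elim: s => [|x s IH] /=; first by move=> _ _; apply: rst_refl.
case/andP=> xNs uniq_s clique_xs; rewrite rev_cons -cats1.
apply: (rst_trans _ _ _ (x :: rev s)).
  apply: (racg_eq_cat (rst_refl _ _ [:: x])); apply: IH => // y z ys zs.
  by apply: clique_xs; rewrite inE ?ys ?zs orbT.
apply: racg_eq_commute; apply/allP => y; rewrite mem_rev => ys.
by apply: clique_xs; rewrite ?inE ?eqxx ?ys ?orbT //; apply: contraNneq xNs => ->.
Qed.

Lemma racg_eq_rev_cat s : racg_eq e (rev s ++ s) [::].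
Proof.
elim: s => [|x s IH]; first exact: rst_refl.
rewrite rev_cons -cats1 -catA; apply: rst_trans IH.
exact/rst_step/(racg_cancel e (rev s) s x).
Qed.

Lemma racg_eq_cancel_pair x m s :
  all (e x) m -> racg_eq e (x :: m ++ x :: s) (m ++ s).
Proof.
move=> adj_m; apply: (rst_trans _ _ _ ((m ++ [:: x]) ++ x :: s)).
  exact: racg_eq_cat (racg_eq_commute adj_m) (rst_refl _ _ (x :: s)).
by rewrite -catA; apply/rst_step/(racg_cancel e m s x).
Qed.

Definition reduced (w : seq T) :=
  forall p m s x, w = p ++ x :: m ++ x :: s -> ~~ all (e x) m.

Lemma reduced_prefix r t : reduced (r ++ t) -> reduced r.
Proof.
move=> red_rt p m s x def_r; apply: (red_rt p m (s ++ t) x).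
by rewrite def_r -catA /= -catA.
Qed.

Lemma racg_len_le w w' : racg_eq e w w' -> racg_len e w <= size w'.
Proof.
move=> eq_ww'; rewrite /racg_len; case: ex_minnP => n _; apply.
by apply/asboolP; exists w'.
Qed.

Lemma racg_len_geodesic w :
  exists w', [/\ racg_eq e w w', size w' = racg_len e w & reduced w'].
Proof.
rewrite /racg_len; case: ex_minnP => _ /asboolP [w' [<- eq_ww']] min_w'.
exists w'; split=> // p m s x def_w'; apply/negP => adj_m.
have /min_w' : `[< exists w'', size w'' = size (p ++ m ++ s) /\ racg_eq e w w'' >].
  apply/asboolP; exists (p ++ m ++ s); split=> //; apply: rst_trans eq_ww' _.
  by rewrite def_w'; apply: racg_eq_cat (rst_refl _ _ p) (racg_eq_cancel_pair _ adj_m).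
by rewrite def_w' !size_cat /= size_cat /= !addnS ltnNge leqnSn.
Qed.

Lemma racg_len_eq0 w : racg_len e w = 0 <-> racg_eq e w [::].
Proof.
split=> [|eq_w0]; last by apply/eqP; rewrite -leqn0 (racg_len_le eq_w0).
move=> len0; have [w' [eq_ww' size_w' _]] := racg_len_geodesic w.
by move: size_w'; rewrite len0 => /size0nil def_w'; rewrite -def_w'.
Qed.

Definition pair_proj (a b : T) (r : seq T) := filter (pred2 a b) r.

Definition proj_equiv (r1 r2 : seq T) :=
  forall a b, ~~ e a b -> pair_proj a b r1 = pair_proj a b r2.

(* Equivalently (cancellableP), r = p ++ x :: s with x adjacent to every letter of s;
   stated through projections, it is visibly invariant under proj_equiv. *)
Definition cancellable (r : seq T) (x : T) :=
  (x \in r) && [forall b, ~~ e x b ==> (last x (pair_proj x b r) == x)].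

Definition rem_last (x : T) (r : seq T) := rev (rem x (rev r)).

Definition push (r : seq T) (x : T) :=
  if cancellable r x then rem_last x r else rcons r x.

Definition racg_reduce (w : seq T) := foldl push [::] w.

Lemma cancellable_rcons r y x :
  cancellable (rcons r y) x = (y == x) || e x y && cancellable r x.
Proof.
rewrite /cancellable /pair_proj mem_rcons inE eq_sym.
case: (eqVneq y x) => [->|neq_yx] /=.
  by apply/forallP => b; rewrite filter_rcons /= eqxx last_rcons eqxx implybT.
case: (boolP (e x y)) => [exy|nexy] /=.
  congr (_ && _); apply: eq_forallb => b; case: (boolP (e x b)) => //= nexb.
  have /negbTE neq_yb : y != b by apply: contraNneq nexb => <-.
  by rewrite filter_rcons /= (negbTE neq_yx) neq_yb.
apply/negP => /andP [_ /forallP /(_ y)]; rewrite nexy filter_rcons /= eqxx orbT.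
by rewrite last_rcons (negbTE neq_yx).
Qed.

Lemma cancellableP r x :
  reflect (exists p s, r = p ++ x :: s /\ all (e x) s) (cancellable r x).
Proof.
elim/last_ind: r => [|r y IH]; first by apply: ReflectF => -[[|? ?] [? []]].
rewrite cancellable_rcons; apply: (iffP orP) => [[/eqP->|/andP [exy /IH [p [s [-> adj_s]]]]]|].
- by exists r, [::]; rewrite cats1.
- by exists p, (rcons s y); rewrite rcons_cat all_rcons exy adj_s.
case=> p [s []]; case/lastP: s => [|s z].
  by rewrite cats1 => /rcons_inj [_ ->]; left.
rewrite -rcons_cons -rcons_cat all_rcons => /rcons_inj [def_r ->] /andP [exz adj_s].
by right; rewrite exz; apply/IH; exists p, s.
Qed.

Lemma cancellable_cat r t x :
  cancellable (r ++ t) x = cancellable t x || all (e x) t && cancellable r x.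
Proof.
elim/last_ind: t => [|t y IH]; first by rewrite cats0.
rewrite -rcons_cat !cancellable_rcons IH all_rcons.
by case: eqP; case: (e x y); rewrite /= ?orbT.
Qed.

Lemma reduced_rcons r x : reduced (rcons r x) <-> reduced r /\ ~~ cancellable r x.
Proof.
split=> [red_rx | [red_r /cancellableP not_canc] p m s y].
  split; first by apply: (@reduced_prefix _ [:: x]); rewrite cats1.
  apply/cancellableP => -[p [s [def_r adj_s]]].
  by move: (red_rx p s [::] x); rewrite adj_s def_r -cats1 -catA => /(_ erefl).
case/lastP: s => [|s z].
  rewrite cats1 -rcons_cons -rcons_cat => /rcons_inj [def_r eq_xy].
  by apply/negP => adj_m; apply: not_canc; exists p, m; rewrite def_r eq_xy.
rewrite -rcons_cons -rcons_cat -rcons_cons -rcons_cat => /rcons_inj [def_r _].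
exact: red_r def_r.
Qed.

Lemma reduced_cat r t :
  reduced r -> uniq t -> {in t, forall x, ~~ cancellable r x} -> reduced (r ++ t).
Proof.
elim/last_ind: t => [|t x IH] red_r; first by rewrite cats0.
rewrite rcons_uniq => /andP [xNt uniq_t] not_canc; rewrite -rcons_cat.
apply/reduced_rcons; split.
  by apply: IH => // y yt; apply: not_canc; rewrite mem_rcons inE yt orbT.
rewrite cancellable_cat {1}/cancellable (negbTE xNt) /= negb_and orbC.
by rewrite not_canc // mem_rcons mem_head.
Qed.

Hypotheses (e_sym : symmetric e) (e_irr : irreflexive e).

Lemma pred2_nonadj a b u v : ~~ e a b -> e u v -> pred2 a b u -> ~~ pred2 a b v.
Proof.
move=> nab euv /orP [] /eqP eq_u; apply/negP => /orP [] /eqP eq_v; subst u v.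
- by rewrite e_irr in euv.
- by rewrite euv in nab.
- by rewrite e_sym euv in nab.
- by rewrite e_irr in euv.
Qed.

Lemma eq_cancellable r1 r2 x :
  (forall b, ~~ e x b -> pair_proj x b r1 = pair_proj x b r2) ->
  cancellable r1 x = cancellable r2 x.
Proof.
move=> eq_proj; rewrite /cancellable.
have mem_proj r : (x \in pair_proj x x r) = (x \in r).
  by rewrite mem_filter /= eqxx.
rewrite -mem_proj eq_proj ?e_irr // mem_proj; congr (_ && _).
by apply: eq_forallb => b; case: (boolP (e x b)) => //= nexb; rewrite eq_proj.
Qed.

Lemma pair_proj_push a b r x :
  pair_proj a b (push r x) =
  if pred2 a b x then
    if cancellable r x then rem_last x (pair_proj a b r) else rcons (pair_proj a b r) x
  else pair_proj a b r.
Proof.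
rewrite /push /pair_proj /rem_last.
case: ifP => _; last by rewrite filter_rcons; case: ifP.
by rewrite filter_rev filter_rem filter_rev; case: ifP; rewrite ?revK.
Qed.

Lemma push_proj_equiv r1 r2 x :
  proj_equiv r1 r2 -> proj_equiv (push r1 x) (push r2 x).
Proof.
move=> eq12 a b nab; rewrite !pair_proj_push eq12 //.
by rewrite (@eq_cancellable r1 r2) // => c; apply: eq12.
Qed.

Lemma foldl_push_proj_equiv r1 r2 w :
  proj_equiv r1 r2 -> proj_equiv (foldl push r1 w) (foldl push r2 w).
Proof. by elim: w r1 r2 => [|x w IH] r1 r2 //= /(push_proj_equiv x); apply: IH. Qed.

Lemma push_commute r u v :
  e u v -> proj_equiv (push (push r u) v) (push (push r v) u).
Proof.
have canc_push y x : e x y -> cancellable (push r y) x = cancellable r x.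
  move=> exy; apply: eq_cancellable => b nexb; rewrite pair_proj_push.
  have yNxb : ~~ pred2 x b y by apply: (pred2_nonadj nexb exy); rewrite /= eqxx.
  by rewrite (negbTE yNxb).
move=> euv a b nab; rewrite !pair_proj_push !canc_push // 1?e_sym //.
case: (boolP (pred2 a b u)) => [abu|_]; last by case: ifP.
by rewrite (negbTE (pred2_nonadj nab euv abu)).
Qed.

Lemma pair_proj_catC a b s t :
  ~~ e a b -> {in s & t, forall x y, e x y} ->
  pair_proj a b (s ++ t) = pair_proj a b (t ++ s).
Proof.
move=> nab adj_st; rewrite /pair_proj !filter_cat.
case def_s: (filter _ s) => [|c s']; first by rewrite cats0.
case def_t: (filter _ t) => [|d t']; first by rewrite cats0.
have: c \in filter (pred2 a b) s by rewrite def_s mem_head.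
have: d \in filter (pred2 a b) t by rewrite def_t mem_head.
rewrite !mem_filter => /andP [abd dt] /andP [abc cs].
by have := pred2_nonadj nab (adj_st _ _ cs dt) abc; rewrite abd.
Qed.

Lemma reduced_delete p x s :
  all (e x) s -> reduced (p ++ x :: s) -> reduced (p ++ s).
Proof.
elim/last_ind: s => [|s z IH]; first by move=> _; rewrite cats0 => /reduced_prefix.
rewrite all_rcons -rcons_cons -!rcons_cat => /andP [exz adj_s].
case/reduced_rcons => /(IH adj_s) red_ps not_canc; apply/reduced_rcons; split=> //.
have /negbTE neq_xz : x != z by apply: contraTneq exz => ->; rewrite e_irr.
by move: not_canc; rewrite -cat_rcons !cancellable_cat cancellable_rcons neq_xz e_sym exz.
Qed.

Lemma rem_last_rcons r z x :
  rem_last x (rcons r z) = if z == x then r else rcons (rem_last x r) z.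
Proof. by rewrite /rem_last rev_rcons /=; case: ifP; rewrite ?revK // rev_cons. Qed.

Lemma rem_last_cat p x s : x \notin s -> rem_last x (p ++ x :: s) = p ++ s.
Proof.
elim/last_ind: s => [|s z IH]; first by rewrite cats0 cats1 rem_last_rcons eqxx.
rewrite mem_rcons inE negb_or => /andP [neq_xz xNs].
by rewrite -rcons_cons -!rcons_cat rem_last_rcons eq_sym (negbTE neq_xz) IH.
Qed.

Lemma adj_notin x s : all (e x) s -> x \notin s.
Proof. by move=> adj_s; apply/negP => /(allP adj_s); rewrite e_irr. Qed.

Lemma reduced_push r x : reduced r -> reduced (push r x).
Proof.
rewrite /push; case: ifP => [/cancellableP [p [s [-> adj_s]]]|not_canc] red_r.
  have xNs := adj_notin adj_s.
  by rewrite rem_last_cat //; exact: reduced_delete adj_s red_r.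
by apply/reduced_rcons; rewrite not_canc.
Qed.

Lemma reduced_racg_reduce w : reduced (racg_reduce w).
Proof.
elim/last_ind: w => [|w x IH]; first by move=> [|? ?].
by rewrite /racg_reduce foldl_rcons; apply: reduced_push.
Qed.

Lemma push_cancel r v : reduced r -> proj_equiv (push (push r v) v) r.
Proof.
move=> red_r; rewrite {2}/push; case: ifP => [/cancellableP [p [s [def_r adj_s]]]|_].
  have vNs := adj_notin adj_s.
  have red_pv : reduced (rcons p v).
    by apply: (@reduced_prefix _ s); move: red_r; rewrite def_r cat_rcons.
  rewrite def_r rem_last_cat // /push cancellable_cat.
  case/reduced_rcons: red_pv => _ /negbTE ->.
  rewrite {1}/cancellable (negbTE vNs) andbF /= -cats1 -catA.
  move=> a b nab; rewrite /pair_proj -cat1s !(filter_cat _ p); congr (_ ++ _).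
  by apply: pair_proj_catC => // y z ys; rewrite inE => /eqP ->; rewrite e_sym (allP adj_s).
by rewrite /push cancellable_rcons eqxx rem_last_rcons eqxx.
Qed.

Lemma racg_reduce_id w : reduced w -> racg_reduce w = w.
Proof.
elim/last_ind: w => [|w x IH] //; case/reduced_rcons => /IH red_w not_canc.
by rewrite /racg_reduce foldl_rcons -/(racg_reduce w) red_w /push (negbTE not_canc).
Qed.

Lemma size_racg_reduce w : size (racg_reduce w) <= size w.
Proof.
elim/last_ind: w => [|w x IH] //; rewrite /racg_reduce foldl_rcons -/(racg_reduce w).
rewrite size_rcons /push; case: ifP => [/andP [xr _]|_]; last by rewrite size_rcons.
rewrite /rem_last size_rev size_rem ?mem_rev // size_rev.
exact: leq_trans (leq_pred _) (leq_trans IH (leqnSn _)).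
Qed.

Lemma proj_equiv_size r1 r2 : proj_equiv r1 r2 -> size r1 = size r2.
Proof.
move=> eq12; apply/perm_size/allP => x _; apply/eqP.
have count_proj r : count_mem x r = size (pair_proj x x r).
  by rewrite size_filter; apply: eq_count => y /=; rewrite orbb.
by rewrite !count_proj eq12 ?e_irr.
Qed.

Lemma racg_reduce_eq w w' :
  racg_eq e w w' -> proj_equiv (racg_reduce w) (racg_reduce w').
Proof.
elim=> {w w'} [w w' []|w|w w' _ eq_ww'|w1 w2 w3 _ eq12 _ eq23] //.
- move=> p s v; rewrite /racg_reduce !foldl_cat -/(racg_reduce p) /=.
  by apply/foldl_push_proj_equiv/push_cancel/reduced_racg_reduce.
- move=> p s u v euv; rewrite /racg_reduce !foldl_cat -/(racg_reduce p) /=.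
  exact/foldl_push_proj_equiv/push_commute.
- by move=> a b nab; rewrite eq_ww'.
- by move=> a b nab; rewrite eq12 ?eq23.
Qed.

Lemma reduced_size_le w w' : reduced w -> racg_eq e w w' -> size w <= size w'.
Proof.
move=> red_w /racg_reduce_eq /proj_equiv_size; rewrite racg_reduce_id // => ->.
exact: size_racg_reduce.
Qed.

Lemma racg_len_reduced w w' : racg_eq e w w' -> reduced w' -> racg_len e w = size w'.
Proof.
move=> eq_ww' red_w'; apply/eqP; rewrite eqn_leq racg_len_le //=.
have [w'' [eq_ww'' <- _]] := racg_len_geodesic w.
exact: reduced_size_le red_w' (rst_trans _ _ _ _ _ (rst_sym _ _ _ _ eq_ww') eq_ww'').
Qed.

Lemma racg_len_eq w1 w2 : racg_eq e w1 w2 -> racg_len e w1 = racg_len e w2.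
Proof.
have [w' [eq2 <- red_w']] := racg_len_geodesic w2.
by move=> eq1; apply: racg_len_reduced red_w'; apply: rst_trans eq1 eq2.
Qed.

End RacgWords.

Section HomWord.

Variables (TG TL : finType) (f : TG -> seq TL).

Lemma hom_word_cat w1 w2 : hom_word f (w1 ++ w2) = hom_word f w1 ++ hom_word f w2.
Proof. by rewrite /hom_word map_cat flatten_cat. Qed.

Lemma hom_word_rcons w v : hom_word f (rcons w v) = hom_word f w ++ f v.
Proof. by rewrite /hom_word map_rcons flatten_rcons. Qed.

Lemma rev_hom_word w : rev (hom_word f w) = hom_word (rev \o f) (rev w).
Proof. by rewrite /hom_word rev_flatten map_rev -map_comp. Qed.

Lemma size_hom_word_bounds n w :
  (forall v, 0 < size (f v) <= n) ->
  size w <= size (hom_word f w) <= n * size w.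
Proof.
move=> size_f; elim: w => [|v w IH] //=; rewrite -cat1s hom_word_cat size_cat mulnS.
have /andP [size_v_gt0 size_v_le] := size_f v; case/andP: IH => IH_lb IH_ub.
by rewrite /hom_word /= cats0 -add1n leq_add // leq_add.
Qed.

Lemma racg_eq_hom_word (eL : rel TL) (f' : TG -> seq TL) w :
  (forall v, racg_eq eL (f v) (f' v)) -> racg_eq eL (hom_word f w) (hom_word f' w).
Proof.
move=> eq_ff'; elim: w => [|v w IH]; first exact: rst_refl.
exact: racg_eq_cat (eq_ff' v) IH.
Qed.

Lemma hom_word_racg_eq (eG : rel TG) (eL : rel TL) w w' :
  racg_hom eG eL f -> racg_eq eG w w' -> racg_eq eL (hom_word f w) (hom_word f w').
Proof.
case=> f_inv f_comm; elim=> {w w'} [w w' []|w|w w' _|w1 w2 w3 _ eq12 _ eq23].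
- move=> a b v; rewrite !hom_word_cat.
  by have := racg_eq_ctx (hom_word f a) (hom_word f b) (f_inv v); rewrite /hom_word /= cats0.
- move=> a b u v euv; rewrite !hom_word_cat.
  have := racg_eq_ctx (hom_word f a) (hom_word f b) (f_comm u v euv).
  by rewrite /hom_word /= !cats0 -!catA.
- exact: rst_refl.
- exact: rst_sym.
- exact: rst_trans eq12 eq23.
Qed.

End HomWord.

Section Fibres.

Variables (TL TG : finType) (eL : rel TL) (eG : rel TG) (g : TL -> TG).
Hypotheses (eL_sym : symmetric eL) (eL_irr : irreflexive eL) (eG_irr : irreflexive eG).
Hypothesis g_mor : graph_morphism (compl_graph eL) (compl_graph eG) g.
Hypothesis g_surj : forall v, exists x, g x = v.
Hypothesis g_loc : locally_surjective (compl_graph eL) (compl_graph eG) g.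

Definition fibre (v : TG) : seq TL := enum [pred x | g x == v].

Lemma mem_fibre v x : (x \in fibre v) = (g x == v).
Proof. by rewrite mem_enum. Qed.

Lemma size_fibre v : 0 < size (fibre v) <= #|TL|.
Proof.
rewrite -cardE max_card andbT; have [x gx] := g_surj v.
by apply/card_gt0P; exists x; rewrite inE gx.
Qed.

Lemma fibre_clique v : {in fibre v &, forall x y, x != y -> eL x y}.
Proof.
move=> x y; rewrite !mem_fibre => /eqP gx /eqP gy neq_xy; apply/negPn/negP => nexy.
by move: (g_mor (x := x) (y := y)); rewrite /compl_graph neq_xy nexy gx gy eqxx => /(_ isT).
Qed.

Lemma fibre_adj u v x y : eG u v -> x \in fibre u -> y \in fibre v -> eL x y.
Proof.
move=> euv; rewrite !mem_fibre => /eqP gx /eqP gy; apply/negPn/negP => nexy.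
have neq_xy : x != y by apply: contraTneq euv => eq_xy; rewrite -gx -gy eq_xy eG_irr.
move: (g_mor (x := x) (y := y)).
by rewrite /compl_graph neq_xy nexy gx gy euv andbF => /(_ isT).
Qed.

Lemma fibre_racg_hom : racg_hom eG eL fibre.
Proof.
split=> [v|u v euv]; last by apply: racg_eq_catC => x y; apply: fibre_adj.
apply: rst_trans (racg_eq_rev_cat eL (fibre v)).
exact: racg_eq_cat (racg_eq_rev_clique (enum_uniq _) (@fibre_clique v)) (rst_refl _ _ _).
Qed.

Lemma adj_fibre x v : all (eL x) (fibre v) -> eG (g x) v.
Proof.
move=> adj_xv; apply/negPn/negP => nexv.
have [eq_xv|neq_xv] := eqVneq (g x) v.
  by move: (allP adj_xv x); rewrite mem_fibre eq_xv eqxx eL_irr => /(_ isT).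
have [y [/andP [_ nexy] gy]] : exists y, compl_graph eL x y /\ g y = v.
  by apply: g_loc; rewrite /compl_graph neq_xv nexv.
by move: (allP adj_xv y); rewrite mem_fibre gy eqxx (negbTE nexy) => /(_ isT).
Qed.

Lemma cancellable_hom_word_fibre w x :
  cancellable eL (hom_word fibre w) x -> cancellable eG w (g x).
Proof.
elim/last_ind: w => [|w v IH] //; rewrite hom_word_rcons cancellable_cat cancellable_rcons.
case/orP=> [/andP [xv _]|/andP [/adj_fibre -> /IH ->]]; last by rewrite orbT.
by rewrite mem_fibre eq_sym in xv; rewrite xv.
Qed.

Lemma reduced_hom_word_fibre w : reduced eG w -> reduced eL (hom_word fibre w).
Proof.
elim/last_ind: w => [|w v IH]; first by move=> _ [|? ?].
case/reduced_rcons => /IH red_w not_canc; rewrite hom_word_rcons.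
apply: reduced_cat red_w (enum_uniq _) _ => x; rewrite mem_fibre => /eqP gx.
by apply: contra not_canc; rewrite -gx; apply: cancellable_hom_word_fibre.
Qed.

Lemma racg_len_hom_word_fibre w :
  racg_len eG w <= racg_len eL (hom_word fibre w) <= #|TL| * racg_len eG w.
Proof.
have [w' [eq_ww' <- red_w']] := racg_len_geodesic eG w.
rewrite (racg_len_reduced eL_sym eL_irr (hom_word_racg_eq fibre_racg_hom eq_ww')).
  exact/size_hom_word_bounds/size_fibre.
exact: reduced_hom_word_fibre.
Qed.

Lemma racg_dist_hom_word_fibre w1 w2 :
  racg_dist eL (hom_word fibre w1) (hom_word fibre w2) =
  racg_len eL (hom_word fibre (rev w1 ++ w2)).
Proof.
rewrite /racg_dist hom_word_cat; apply: (racg_len_eq eL_sym eL_irr).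
apply: (racg_eq_cat _ (rst_refl _ _ _)); rewrite rev_hom_word.
apply: racg_eq_hom_word => v /=.
exact/rst_sym/racg_eq_rev_clique/fibre_clique/enum_uniq.
Qed.

End Fibres.

Unset Implicit Arguments.

Theorem corollary6p3 (TL TG : finType) (eL : rel TL) (eG : rel TG)
  (hL : simple_graph eL) (hG : simple_graph eG)
  (g : TL -> TG)
  (g_mor : graph_morphism (compl_graph eL) (compl_graph eG) g)
  (g_surj : forall y : TG, exists x : TL, g x = y)
  (g_loc : locally_surjective (compl_graph eL) (compl_graph eG) g) :
  exists phi : TG -> seq TL, racg_qi_embedding eG eL phi.
Proof.
have [eL_sym eL_irr] := hL; have [_ eG_irr] := hG.
have len_bounds := racg_len_hom_word_fibre eL_sym eL_irr eG_irr g_mor g_surj g_loc.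
exists (fibre g); split; first exact: fibre_racg_hom.
split=> [w /racg_len_eq0 len0|].
  apply/racg_len_eq0; by have /andP [+ _] := len_bounds w; rewrite len0 leqn0 => /eqP.
exists #|TL|.+1, 0; split=> // w1 w2.
rewrite (racg_dist_hom_word_fibre eL_sym eL_irr g_mor) /racg_dist !addn0 mulSn.
have /andP [lb ub] := len_bounds (rev w1 ++ w2).
by split; [apply: leq_trans lb (leq_addr _ _) | apply: leq_trans ub (leq_addl _ _)].
Qed.
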